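(* Let $A\in\mathbb Z^{d\times n}$ with $\ker(A)\cap\mathbb N^n=\{0\}$. Then the universal distance-reducing Markov basis $\mathcal D(A)$ and the universal strongly distance-reducing Markov basis $\mathcal D^s(A)$ are finite sets.
   Context: For $z\in\mathbb Z^n$, $z^\pm\in\mathbb N^n$ are the unique vectors with disjoint supports and $z=z^+-z^-$; $\|\cdot\|$ is the $1$-norm. For nonzero $z\in\ker(A)$: $u\in\ker(A)$ reduces $z$ from $z^+$ if some $\varepsilon\in\{\pm1\}$ has $z^++\varepsilon u\in\mathbb N^n$ and $\|z^++\varepsilon u-z^-\|<\|z\|$; from $z^-$ if some $\varepsilon$ has $z^-+\varepsilon u\in\mathbb N^n$ and $\|z^+-(z^-+\varepsilon u)\|<\|z\|$. $B\subseteq\ker(A)$ is distance reducing if every nonzero $z\in\ker(A)$ is reduced from $z^+$ or from $z^-$ by some element of $B$; strongly distance reducing if every nonzero $z$ is reduced from $z^+$ by some element of $B$ and from $z^-$ by some (possibly different) element of $B$. A minimal (strongly) distance reducing Markov basis is a (strongly) distance reducing set no proper subset of which is (strongly) distance reducing. $\mathcal D(A)$ (resp. $\mathcal D^s(A)$) is the union of all minimal distance reducing (resp. minimal strongly distance reducing) Markov bases. *)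

From mathcomp Require Import all_boot all_order all_algebra.
Set Implicit Arguments. Unset Strict Implicit. Unset Printing Implicit Defensive.
Import Order.TTheory GRing.Theory Num.Theory.
Local Open Scope ring_scope.

Section MarkovDefs.
Variables (d n : nat) (A : 'M[int]_(d, n)).

Definition in_ker (z : 'cV[int]_n) : Prop := A *m z = 0.

Definition nonneg (z : 'cV[int]_n) : Prop := forall i, 0 <= z i 0.

Definition posp (z : 'cV[int]_n) : 'cV[int]_n := \col_i Num.max (z i 0) 0.
Definition negp (z : 'cV[int]_n) : 'cV[int]_n := \col_i Num.max (- z i 0) 0.

Definition norm1 (z : 'cV[int]_n) : int := \sum_i `|z i 0|.

(* sign eps in {1,-1} encoded by a boolean *)
Definition sgnv (eps : bool) (u : 'cV[int]_n) : 'cV[int]_n := if eps then u else - u.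

Definition reduces_plus (z u : 'cV[int]_n) : Prop :=
  exists eps : bool, nonneg (posp z + sgnv eps u) /\
    norm1 (posp z + sgnv eps u - negp z) < norm1 z.

Definition reduces_minus (z u : 'cV[int]_n) : Prop :=
  exists eps : bool, nonneg (negp z + sgnv eps u) /\
    norm1 (posp z - (negp z + sgnv eps u)) < norm1 z.

Definition distance_reducing (B : 'cV[int]_n -> Prop) : Prop :=
  (forall u, B u -> in_ker u) /\
  forall z, in_ker z -> z <> 0 ->
    (exists2 u, B u & reduces_plus z u) \/ (exists2 u, B u & reduces_minus z u).

Definition strongly_distance_reducing (B : 'cV[int]_n -> Prop) : Prop :=
  (forall u, B u -> in_ker u) /\
  forall z, in_ker z -> z <> 0 ->
    (exists2 u, B u & reduces_plus z u) /\ (exists2 u, B u & reduces_minus z u).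

Definition proper_subset (B' B : 'cV[int]_n -> Prop) : Prop :=
  (forall u, B' u -> B u) /\ exists u, B u /\ ~ B' u.

Definition minimal_wrt (P : ('cV[int]_n -> Prop) -> Prop) (B : 'cV[int]_n -> Prop) : Prop :=
  P B /\ forall B', proper_subset B' B -> ~ P B'.

Definition univ_DR (u : 'cV[int]_n) : Prop :=
  exists2 B, minimal_wrt distance_reducing B & B u.

Definition univ_SDR (u : 'cV[int]_n) : Prop :=
  exists2 B, minimal_wrt strongly_distance_reducing B & B u.

End MarkovDefs.

Definition finite_set (n : nat) (S : 'cV[int]_n -> Prop) : Prop :=
  exists s : seq 'cV[int]_n, forall u, S u -> u \in s.

(* If u lies in a minimal (strongly) distance reducing basis B, then B \ {u} fails to
   reduce some nonzero z in ker(A).  Reducibility is monotone for the conformal order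
   (y^+ <= z^+ and y^- <= z^-), so for every nonzero kernel element y below z that B
   reduces, the reduction must come from u itself; and u reducing y forces
   ||u|| < 2 ||y||.  By Dickson's lemma every nonzero kernel element lies above one of
   finitely many such y, which bounds ||u||. *)

From mathcomp Require Import all_boot all_order all_algebra zify.
From Stdlib Require Import Classical ClassicalEpsilon.
Set Implicit Arguments. Unset Strict Implicit. Unset Printing Implicit Defensive.
Import GRing.Theory Num.Theory.

Definition minorant_seq (X : eqType) (le : X -> X -> Prop) (S : X -> Prop) (r : seq X) :=
  (forall y, y \in r -> S y) /\ forall x, S x -> exists2 y, y \in r & le y x.

Section Dickson.
Variables (X : eqType) (I : finType) (f : X -> I -> nat).

Definition le_coord (y x : X) := forall i, f y i <= f x i.

Lemma dickson_free_coords k (J : {set I}) (S : X -> Prop) : #|J| <= k ->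
    (forall x y, S x -> S y -> forall i, i \notin J -> f x i = f y i) ->
  exists r, minorant_seq le_coord S r.
Proof.
elim: k J S => [|k IH] J S leJk agree.
  have J0 : J = set0 by apply/eqP; rewrite -cards_eq0 -leqn0.
  have [[x0 Sx0]|S0] := classic (exists x0, S x0); last first.
    by exists [::]; split=> // x Sx; case: S0; exists x.
  exists [:: x0]; split=> [y|x Sx]; first by rewrite inE => /eqP->.
  by exists x0; rewrite ?inE // => i; rewrite (agree x0 x) // J0 inE.
have [[x0 Sx0]|S0] := classic (exists x0, S x0); last first.
  by exists [::]; split=> // x Sx; case: S0; exists x.
have /choice [R slice_min] : forall ic : I * nat, exists r, ic.1 \in J ->
    minorant_seq le_coord (fun x => S x /\ f x ic.1 = ic.2) r.
  move=> [i c]; have [iJ|] := boolP (i \in J); last by exists [::].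
  have leJik : #|J :\ i| <= k by move: leJk; rewrite (cardsD1 i J) iJ.
  have [|r slice_r] := IH (J :\ i) (fun x => S x /\ f x i = c) leJik.
    move=> x y [Sx <-] [Sy fyi] j; rewrite !inE negb_and negbK.
    by case/orP=> [/eqP-> //|]; apply: agree.
  by exists r.
(* An x not above x0 lies in a slice f x i = c < f x0 i, on which coordinate i is fixed. *)
exists (x0 :: flatten [seq R (i, c) | i <- enum J, c <- iota 0 (f x0 i)]); split.
  move=> y; rewrite inE => /predU1P[-> //|/flattenP[s /allpairsPdep[i [c [iJ _ ->]]]]].
  by rewrite mem_enum in iJ; case: (slice_min (i, c) iJ) => Rmin _ /Rmin[].
move=> x Sx; have [le_x0x|] := boolP [forall i, f x0 i <= f x i].
  by exists x0; [rewrite inE eqxx | apply/forallP].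
rewrite negb_forall => /existsP[i]; rewrite -ltnNge => lt_xi.
have iJ : i \in J by apply: contraLR lt_xi => /(agree x x0 Sx Sx0)->; rewrite ltnn.
have [_ /(_ x (conj Sx erefl))[y Ry le_yx]] := slice_min (i, f x i) iJ.
exists y => //; rewrite inE; apply/predU1P; right; apply/flattenP.
exists (R (i, f x i)) => //; apply/allpairsPdep.
by exists i, (f x i); rewrite mem_enum mem_iota.
Qed.

Lemma dickson (S : X -> Prop) : exists r, minorant_seq le_coord S r.
Proof. by apply: (@dickson_free_coords _ setT S (leqnn _)) => x y _ _ i; rewrite inE. Qed.

End Dickson.

Local Open Scope ring_scope.

Section ConformalOrder.
Variable n : nat.
Implicit Types y z u : 'cV[int]_n.

Definition conformal y z :=
  forall i, posp y i 0 <= posp z i 0 /\ negp y i 0 <= negp z i 0.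

Lemma conformal_minorants (S : 'cV[int]_n -> Prop) : exists r, minorant_seq conformal S r.
Proof.
pose f z (p : 'I_n * bool) := absz ((if p.2 then posp z else negp z) p.1 0).
have [r [rS minor]] := dickson f S.
exists r; split=> // z /minor[y ry le_yz]; exists y => // i.
by have := le_yz (i, true); have := le_yz (i, false); rewrite /f /= !mxE; lia.
Qed.

Lemma posp_opp z : posp (- z) = negp z.
Proof. by apply/matrixP => i j; rewrite !mxE. Qed.

Lemma negp_opp z : negp (- z) = posp z.
Proof. by rewrite -posp_opp opprK. Qed.

Lemma norm1_opp z : norm1 (- z) = norm1 z.
Proof. by apply: eq_bigr => i _; rewrite mxE normrN. Qed.

Lemma conformal_opp y z : conformal y z -> conformal (- y) (- z).
Proof. by move=> yz i; rewrite !posp_opp !negp_opp; have [] := yz i. Qed.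

Lemma abs_coord_le_norm1 z i : `|z i 0| <= norm1 z.
Proof. by rewrite /norm1 (bigD1 i) //= lerDl sumr_ge0. Qed.

Lemma reduces_minusE z u : reduces_minus z u <-> reduces_plus (- z) u.
Proof.
rewrite /reduces_plus posp_opp negp_opp norm1_opp.
by split=> -[eps [nn lt]]; exists eps; split=> //; rewrite -norm1_opp opprB in lt *.
Qed.

Lemma reduces_plus_conformal y z u : conformal y z -> reduces_plus y u -> reduces_plus z u.
Proof.
move=> yz [eps [nn_y lt_y]]; exists eps; split.
  by move=> i; have := nn_y i; have := yz i; rewrite !mxE; lia.
suff: norm1 (posp z + sgnv eps u - negp z) + norm1 y
      <= norm1 (posp y + sgnv eps u - negp y) + norm1 z by lia.
by rewrite /norm1 -!big_split ler_sum //= => i _; have := yz i; rewrite !mxE; lia.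
Qed.

Lemma reduces_minus_conformal y z u : conformal y z -> reduces_minus y u -> reduces_minus z u.
Proof. by rewrite !reduces_minusE => /conformal_opp; apply: reduces_plus_conformal. Qed.

Lemma reduces_plus_norm1 y u : reduces_plus y u -> norm1 u < norm1 y *+ 2.
Proof.
move=> [eps [_ lt_y]]; suff: norm1 u <= norm1 (posp y + sgnv eps u - negp y) + norm1 y by lia.
rewrite /norm1 -big_split ler_sum //= => i _.
have sgnvE : sgnv eps u i 0 = u i 0 \/ sgnv eps u i 0 = - u i 0.
  by rewrite /sgnv; case: ifP; rewrite ?mxE; [left|right].
by rewrite !mxE; case: sgnvE => ->; lia.
Qed.

Lemma reduces_minus_norm1 y u : reduces_minus y u -> norm1 u < norm1 y *+ 2.
Proof. by rewrite reduces_minusE -(norm1_opp y) => /reduces_plus_norm1. Qed.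

End ConformalOrder.

Section Reducibility.
Variable n : nat.
Implicit Types (B : 'cV[int]_n -> Prop) (y z u : 'cV[int]_n).

Definition reducible_by (R : 'cV[int]_n -> 'cV[int]_n -> Prop) B z := exists2 u, B u & R z u.

Definition without B u v := B v /\ v <> u.

Lemma minimal_without (P : ('cV[int]_n -> Prop) -> Prop) B u :
  minimal_wrt P B -> B u -> ~ P (without B u).
Proof. by move=> [_ minB] Bu; apply: minB; split=> [v []|]; last by exists u; split=> // -[]. Qed.

Lemma reduces_of_without (R : 'cV[int]_n -> 'cV[int]_n -> Prop) B u y z :
    (forall y z w, conformal y z -> R y w -> R z w) ->
    conformal y z -> reducible_by R B y -> ~ reducible_by R (without B u) z ->
  R y u.
Proof.
move=> R_conformal yz [w Bw Ryw] not_red; have [<- //|wu] := eqVneq w u.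
by case: not_red; exists w; [split=> //; apply/eqP | apply: R_conformal yz Ryw].
Qed.

End Reducibility.

Section UniversalBases.
Variables (d n : nat) (A : 'M[int]_(d, n)) (r : seq 'cV[int]_n).
Hypothesis r_minorants : minorant_seq (@conformal n) (fun z => in_ker A z /\ z <> 0) r.

Lemma univ_DR_reducer u : univ_DR A u ->
  exists2 y, y \in r & reduces_plus y u \/ reduces_minus y u.
Proof.
move=> [B minB Bu]; have [[Bker Bred] _] := minB; have [rker minor] := r_minorants.
have [z [kz nz not_red]] : exists z, [/\ in_ker A z, z <> 0 &
    ~ (reducible_by (@reduces_plus n) (without B u) z \/
       reducible_by (@reduces_minus n) (without B u) z)].
  apply: NNPP => none; apply: (minimal_without minB Bu).
  split=> [v [/Bker] //|z kz nz]; apply: NNPP => not_red; apply: none; by exists z.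
have [y ry yz] := minor z (conj kz nz); have [ky ny] := rker y ry.
exists y => //; have [red|red] := Bred y ky ny; [left|right].
  by apply: (reduces_of_without (@reduces_plus_conformal n) yz red) => ?; apply: not_red; left.
by apply: (reduces_of_without (@reduces_minus_conformal n) yz red) => ?; apply: not_red; right.
Qed.

Lemma univ_SDR_reducer u : univ_SDR A u ->
  exists2 y, y \in r & reduces_plus y u \/ reduces_minus y u.
Proof.
move=> [B minB Bu]; have [[Bker Bred] _] := minB; have [rker minor] := r_minorants.
have [z [kz nz not_red]] : exists z, [/\ in_ker A z, z <> 0 &
    ~ (reducible_by (@reduces_plus n) (without B u) z /\
       reducible_by (@reduces_minus n) (without B u) z)].
  apply: NNPP => none; apply: (minimal_without minB Bu).
  split=> [v [/Bker] //|z kz nz]; apply: NNPP => not_red; apply: none; by exists z.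
have [y ry yz] := minor z (conj kz nz); have [ky ny] := rker y ry.
have [red_plus red_minus] := Bred y ky ny.
exists y => //.
have [red_plus_z|not_plus] := classic (reducible_by (@reduces_plus n) (without B u) z).
  right; apply: (reduces_of_without (@reduces_minus_conformal n) yz red_minus).
  by move=> red_minus_z; apply: not_red.
by left; exact: reduces_of_without (@reduces_plus_conformal n) yz red_plus not_plus.
Qed.

End UniversalBases.

Lemma reducers_norm1_bounded n (r : seq 'cV[int]_n) : exists N : nat,
  forall u, (exists2 y, y \in r & reduces_plus y u \/ reduces_minus y u) -> norm1 u <= N%:Z.
Proof.
exists ((\max_(y <- r) absz (norm1 y)) * 2)%N => u [y ry red].
have le_y : (absz (norm1 y) <= \max_(y <- r) absz (norm1 y))%N by apply: leq_bigmax_seq.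
have y_ge0 : 0 <= norm1 y by apply: sumr_ge0.
have : norm1 u < norm1 y *+ 2 by case: red => [/reduces_plus_norm1|/reduces_minus_norm1].
lia.
Qed.

Lemma norm1_bounded_finite n (S : 'cV[int]_n -> Prop) (N : nat) :
  (forall u, S u -> norm1 u <= N%:Z) -> finite_set S.
Proof.
move=> bounded; exists [seq \col_i ((g i : nat)%:Z - N%:Z) | g : {ffun 'I_n -> 'I_(N + N).+1}].
move=> u /bounded le_uN; apply/mapP.
exists [ffun i => inord (absz (u i 0 + N%:Z))]; first by rewrite mem_enum.
apply/matrixP => i j; rewrite ord1 mxE ffunE.
have := abs_coord_le_norm1 u i; move: (u i 0) (norm1 u) le_uN => a m le_mN le_am.
by rewrite inordK; lia.
Qed.

Theorem corollary8p17 (d n : nat) (A : 'M[int]_(d, n)) :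
  (forall z : 'cV[int]_n, in_ker A z -> nonneg z -> z = 0) ->
  finite_set (univ_DR A) /\ finite_set (univ_SDR A).
Proof.
move=> _.
have [r r_minorants] := conformal_minorants (fun z => in_ker A z /\ z <> 0).
have [N bounded] := reducers_norm1_bounded r.
split; apply: (norm1_bounded_finite (N := N)) => u Du; apply: bounded.
  exact: univ_DR_reducer r_minorants u Du.
exact: univ_SDR_reducer r_minorants u Du.
Qed.
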